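(* For every $n \ge 1$, the $\mathbb{Z}$-discriminating complexity of $\mathbb{Z}^n$ is asymptotically equivalent to a polynomial of degree $n-1$, i.e. $C_{\mathbb{Z}^n}^{\mathbb{Z}} \approx (R \mapsto R^{n-1})$.
   Context: A group $G$ is fully residually $H$ if for every finite set $S \subseteq G-\{1\}$ there is a homomorphism $\phi: G \to H$ with $1 \notin \phi(S)$ ($\phi$ discriminates $S$). For finite generating sets $X$ of $G$ and $Y$ of $H$, the complexity of $\phi: G\to H$ is $|\phi|_X^Y := \max_{x \in X} |\phi(x)|_Y$. The $H$-discriminating complexity is $C_{G,X}^{H,Y}(R) := \min\{|\phi|_X^Y : \phi \text{ discriminates } B_R(G,X)-\{1\}\}$, $B_R(G,X)$ being the closed ball of radius $R$ about $1$ in the word metric. For $f,g:\mathbb{N}\to\mathbb{N}$, $f \preceq g$ means there is $K$ with $f(R) \le K g(KR)+K$ for all $R$, and $f\approx g$ means $f \preceq g$ and $g\preceq f$. The $\approx$-class of $C_{G,X}^{H,Y}$ is independent of $X,Y$ and is denoted $C_G^H$. *)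

From mathcomp Require Import all_boot all_order all_algebra.
Set Implicit Arguments. Unset Strict Implicit. Unset Printing Implicit Defensive.
Import Order.TTheory GRing.Theory Num.Theory.

(* Abelian groups are written additively as zmodTypes (Z^n and Z are abelian). *)
Local Open Scope ring_scope.

(* g lies in the closed ball of radius R about 0 in the word metric w.r.t. the
   finite generating set X: g is a product (sum) of at most R letters from X^{+-1}. *)
Definition in_ball (G : zmodType) (X : seq G) (R : nat) (g : G) : Prop :=
  exists s : seq G, (size s <= R)%N /\
    all (fun x => (x \in X) || (- x \in X)) s /\ g = \sum_(x <- s) x.

Definition is_hom (G H : zmodType) (phi : G -> H) : Prop :=
  forall x y, phi (x + y) = phi x + phi y.

Definition discriminates_ball (G H : zmodType) (X : seq G) (R : nat)
  (phi : G -> H) : Prop :=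
  forall g, in_ball X R g -> g != 0 -> phi g != 0.

Definition complexity_le (G H : zmodType) (X : seq G) (Y : seq H)
  (phi : G -> H) (c : nat) : Prop :=
  forall x, x \in X -> in_ball Y c (phi x).

Definition is_disc_complexity (G H : zmodType) (X : seq G) (Y : seq H)
  (C : nat -> nat) : Prop :=
  forall R : nat,
    (exists phi : G -> H, is_hom phi /\ discriminates_ball X R phi /\
                          complexity_le X Y phi (C R)) /\
    (forall (phi : G -> H) (c : nat), is_hom phi -> discriminates_ball X R phi ->
        complexity_le X Y phi c -> (C R <= c)%N).

Definition asym_le (f g : nat -> nat) : Prop :=
  exists K : nat, forall R : nat, (f R <= K * g (K * R) + K)%N.
Definition asym_eq (f g : nat -> nat) : Prop := asym_le f g /\ asym_le g f.

(* Z^n as integer row vectors, with its standard basis; Z with generator 1. *)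
Definition std_basis (n : nat) : seq 'rV[int]_n :=
  [seq delta_mx 0 i | i <- enum 'I_n].

From mathcomp Require Import all_boot all_order all_algebra zify.
From Stdlib Require Import ClassicalEpsilon.
Set Implicit Arguments.
Unset Strict Implicit.
Unset Printing Implicit Defensive.
Import Order.TTheory GRing.Theory Num.Theory.
Local Open Scope ring_scope.

(* Upper bound: writing the coordinates of g in base R+1, the map
   g |-> sum_i g_i (R+1)^i kills no nonzero element of the ball of radius R,
   whose coordinates have absolute value at most R, and sends each generator
   to a power of R+1 bounded by (R+1)^(n-1).
   Lower bound: a homomorphism of complexity c that discriminates the ball of
   radius n m is injective on the box {0,...,m}^n, since differences of box
   points lie in that ball; its (m+1)^n points are sent into an interval of
   length 2 n m c, so m^(n-1) <= 2 n c. *)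

Section WordBall.
Variables (G : zmodType) (X : seq G).

Lemma in_ball0 r : in_ball X r 0.
Proof. by exists [::]; rewrite big_nil. Qed.

Lemma in_ballD r1 r2 g h :
  in_ball X r1 g -> in_ball X r2 h -> in_ball X (r1 + r2) (g + h).
Proof.
move=> [s1 [h1 [a1 ->]]] [s2 [h2 [a2 ->]]].
by exists (s1 ++ s2); rewrite size_cat all_cat a1 a2 big_cat leq_add.
Qed.

Lemma in_ballN r g : in_ball X r g -> in_ball X r (- g).
Proof.
move=> [s [hs [ha ->]]]; exists (map -%R s).
rewrite size_map all_map big_map sumrN; split=> //; split=> //.
by apply/allP => x /(allP ha) /=; rewrite opprK orbC.
Qed.

Lemma in_ball_le r1 r2 g : (r1 <= r2)%N -> in_ball X r1 g -> in_ball X r2 g.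
Proof. by move=> le [s [h1 h2]]; exists s; rewrite (leq_trans h1 le). Qed.

Lemma in_ball_mulrn x k : x \in X -> in_ball X k (x *+ k).
Proof.
move=> hx; elim: k => [|k IH]; first by rewrite mulr0n; apply: in_ball0.
rewrite mulrS -add1n; apply: in_ballD IH.
by exists [:: x]; rewrite big_seq1 /= hx.
Qed.

Lemma in_ball_mulrz x z : x \in X -> in_ball X (absz z) (x *~ z).
Proof.
move=> hx; case: z => k; first exact: in_ball_mulrn.
by rewrite NegzE mulrNz; apply/in_ballN/in_ball_mulrn.
Qed.

Lemma in_ball_sum (I : Type) (r : seq I) (P : pred I) (rad : I -> nat) (F : I -> G) :
  (forall i, P i -> in_ball X (rad i) (F i)) ->
  in_ball X (\sum_(i <- r | P i) rad i)%N (\sum_(i <- r | P i) F i).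
Proof.
move=> h; apply: (big_rec2 (fun a b => in_ball X a b)); first exact: in_ball0.
by move=> i y1 y2 Pi hy; apply: in_ballD => //; apply: h.
Qed.

End WordBall.

Section Homomorphisms.
Variables (G H : zmodType) (phi : G -> H).
Hypothesis hom : is_hom phi.

Lemma hom0 : phi 0 = 0.
Proof. by have := hom 0 0; rewrite addr0 -{1}[phi 0]addr0 => /addrI. Qed.

Lemma homN x : phi (- x) = - phi x.
Proof. by apply/eqP; rewrite -addr_eq0 -hom addNr hom0. Qed.

Lemma homB x y : phi (x - y) = phi x - phi y.
Proof. by rewrite hom homN. Qed.

Lemma hom_in_ball (X : seq G) (Y : seq H) r c g :
  complexity_le X Y phi c -> in_ball X r g -> in_ball Y (r * c) (phi g).
Proof.
move=> hc [s [hs [ha ->]]]; apply: (@in_ball_le _ _ (size s * c)).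
  by rewrite leq_mul2r hs orbT.
elim: s {hs} ha => [|x s IH] /=.
  by rewrite big_nil hom0 mul0n => _; apply: in_ball0.
case/andP=> hx ha; rewrite big_cons hom mulSn; apply: in_ballD (IH ha).
case/orP: hx => [/hc //|/hc]; rewrite homN => /in_ballN.
by rewrite opprK.
Qed.

End Homomorphisms.

Lemma in_ball_int r (z : int) : @in_ball int [:: 1] r z <-> (absz z <= r)%N.
Proof.
split; last first.
  move=> hz; apply: in_ball_le hz _.
  by have := @in_ball_mulrz int [:: 1] 1 z (mem_head _ _); rewrite intz.
move=> [s [hs [ha ->]]]; apply: leq_trans hs.
elim: s ha => [|x s IH] /=; first by rewrite big_nil.
rewrite !inE big_cons => /andP [hx /IH]; rewrite eqr_oppLR in hx.
by case/orP: hx => /eqP ->; set t := \sum_(_ <- s) _; set k := size s; lia.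
Qed.

Section StandardBasis.
Variable n : nat.

Lemma delta_mx_in_std_basis i : delta_mx 0 i \in std_basis n.
Proof. by apply: map_f; rewrite mem_enum. Qed.

Lemma in_std_ball_entries m (g : 'rV[int]_n) :
  (forall i, (absz (g 0%R i) <= m)%N) -> in_ball (std_basis n) (n * m) g.
Proof.
move=> hm; rewrite [g]row_sum_delta.
apply: (@in_ball_le _ _ (\sum_(i < n) absz (g 0%R i))%N).
  apply: (@leq_trans (\sum_(i < n) m)%N); first exact: leq_sum.
  by rewrite sum_nat_const card_ord.
apply: in_ball_sum => i _.
by have := in_ball_mulrz (g 0 i) (delta_mx_in_std_basis i); rewrite -scaler_int intz.
Qed.

Lemma std_ball_entry r (g : 'rV[int]_n) i :
  in_ball (std_basis n) r g -> (absz (g 0%R i) <= r)%N.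
Proof.
have entry_hom : is_hom (fun h : 'rV[int]_n => h 0 i) by move=> x y; rewrite mxE.
move=> hr; rewrite -[r]muln1 -in_ball_int; apply: (hom_in_ball entry_hom _ hr).
move=> x /mapP [j _ ->]; apply/in_ball_int; rewrite mxE.
by case: (_ && _).
Qed.

End StandardBasis.

(* The constant digit is divisible by [B] and smaller than [B] in absolute
   value, hence zero; then divide by [B] and induct. *)
Lemma radix_digits_eq0 (B k : nat) (f : nat -> int) :
  (0 < B)%N -> (forall i, (absz (f i) < B)%N) ->
  \sum_(i < k) f i * B%:Z ^+ i = 0 -> forall i, (i < k)%N -> f i = 0.
Proof.
move=> hB; elim: k f => [//|k IH] f hf.
rewrite big_ord_recl expr0 mulr1.
under eq_bigr => j _ do rewrite lift0 exprS mulrCA.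
rewrite -mulr_sumr; set T := \sum_(j < k) _ => /eqP; rewrite addr_eq0 => /eqP f0E.
have /eqP T0 : T == 0.
  have := hf 0%N; rewrite f0E abszN abszM absz_nat -{2}[B]muln1 ltn_pmul2l //.
  by rewrite ltnS leqn0 absz_eq0.
by case=> [_|i]; [rewrite f0E T0 mulr0 oppr0 | exact: (IH (fun j => f j.+1))].
Qed.

Definition radix_sum n (B : nat) (g : 'rV[int]_n) : int :=
  \sum_(i < n) g 0 i * B%:Z ^+ i.

Section RadixSum.
Variable n : nat.

Lemma radix_sum_is_hom B : is_hom (@radix_sum n B).
Proof.
by move=> x y; rewrite -big_split; apply: eq_bigr => i _; rewrite mxE mulrDl.
Qed.

Lemma radix_sum_discriminates R :
  discriminates_ball (std_basis n) R (@radix_sum n R.+1).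
Proof.
move=> g hg; apply: contraNN => /eqP g0; apply/eqP/matrixP => i j.
rewrite ord1 mxE.
pose f k : int := if insub k is Some i then g 0 i else 0.
have hf k : (absz (f k) < R.+1)%N.
  by rewrite /f; case: insub => [i'|] //; rewrite ltnS std_ball_entry.
have := @radix_digits_eq0 R.+1 n f (ltn0Sn _) hf _ j (ltn_ord j).
rewrite /f valK; apply; rewrite -[RHS]g0.
by apply: eq_bigr => i' _; rewrite /f valK.
Qed.

Lemma radix_sum_complexity B : (0 < B)%N ->
  complexity_le (std_basis n) [:: 1] (@radix_sum n B) (B ^ (n - 1)).
Proof.
move=> hB x /mapP [j _ ->]; apply/in_ball_int.
rewrite /radix_sum (bigD1 j) //= big1 ?addr0.
  rewrite mxE !eqxx mul1r abszX absz_nat leq_pexp2l //.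
  by have := ltn_ord j; lia.
by move=> k hk; rewrite mxE (negbTE hk) andbF mul0r.
Qed.

End RadixSum.

Section Pigeonhole.
Variables (n m c : nat) (phi : 'rV[int]_n -> int).
Hypotheses (hom : is_hom phi) (disc : discriminates_ball (std_basis n) (n * m) phi)
  (hc : complexity_le (std_basis n) [:: 1] phi c).

Definition box_point (v : {ffun 'I_n -> 'I_m.+1}) : 'rV[int]_n :=
  \row_i (v i : nat)%:Z.

Lemma box_point_image v : (absz (phi (box_point v)) <= n * m * c)%N.
Proof.
rewrite -in_ball_int; apply: (hom_in_ball hom hc).
by apply: in_std_ball_entries => i; rewrite mxE absz_nat -ltnS.
Qed.

Lemma box_point_injective : injective (phi \o box_point).
Proof.
move=> v w /= e; apply/ffunP => i; apply: val_inj.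
suff /eqP: box_point v - box_point w = 0.
  by rewrite subr_eq0 => /eqP/matrixP/(_ 0 i); rewrite !mxE => -[].
have diff_ball : in_ball (std_basis n) (n * m) (box_point v - box_point w).
  apply: in_std_ball_entries => j; rewrite !mxE.
  by have := ltn_ord (v j); have := ltn_ord (w j); lia.
by apply/eqP/(contraTT (disc diff_ball)); rewrite homB // e subrr.
Qed.

Lemma box_card_le : (m.+1 ^ n <= (2 * n * m * c).+1)%N.
Proof.
pose code v : 'I_(2 * n * m * c).+1 :=
  inord (absz (phi (box_point v) + (n * m * c)%:Z)).
have code_inj : injective code.
  move=> v w /(congr1 (@nat_of_ord _)); rewrite !inordK.
  - move=> e; apply: box_point_injective => /=.
    by move: e (box_point_image v) (box_point_image w); lia.
  - by have := box_point_image w; lia.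
  - by have := box_point_image v; lia.
by have := leq_card code code_inj; rewrite card_ffun !card_ord.
Qed.

Lemma complexity_lower_bound : (0 < n)%N -> (0 < m)%N -> (m ^ (n - 1) <= 2 * n * c)%N.
Proof.
move=> n_gt0 m_gt0; rewrite -(leq_pmul2r m_gt0) -expnSr subn1 prednK //.
have := box_card_le; have : (m ^ n < m.+1 ^ n)%N by rewrite ltn_exp2r.
by nia.
Qed.

End Pigeonhole.

(* The minimum over [nat] is taken with [ex_minn], after deciding the
   (non-decidable) existence of a witness by classical choice. *)
Lemma disc_complexity_exists (G H : zmodType) (X : seq G) (Y : seq H) :
  (forall R, exists (phi : G -> H) c,
     is_hom phi /\ discriminates_ball X R phi /\ complexity_le X Y phi c) ->
  exists C, is_disc_complexity X Y C.
Proof.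
move=> ex.
pose good R c := exists phi : G -> H,
  is_hom phi /\ discriminates_ball X R phi /\ complexity_le X Y phi c.
pose goodb R c : bool := excluded_middle_informative (good R c).
have goodbP R c : goodb R c <-> good R c.
  by rewrite /goodb; case: excluded_middle_informative.
have exb R : exists c, goodb R c.
  by have [phi [c hphi]] := ex R; exists c; apply/goodbP; exists phi.
exists (fun R => ex_minn (exb R)) => R; case: ex_minnP => c /goodbP hc cmin.
by split=> // phi c' h1 h2 h3; apply/cmin/goodbP; exists phi.
Qed.

Lemma asym_le_trans_pointwise (f g h : nat -> nat) :
  (forall R, (f R <= g R)%N) -> asym_le g h -> asym_le f h.
Proof. by move=> fg [K hK]; exists K => R; apply: leq_trans (fg R) (hK R). Qed.

Lemma asym_le_expSn e : asym_le (fun R => R.+1 ^ e)%N (fun R => R ^ e)%N.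
Proof.
exists 2%N => -[|R] /=; first by rewrite exp1n ltn_addl.
apply: leq_trans (leq_addr _ _); apply: leq_trans (leq_pmull _ (ltn0Sn 1)).
by case: e => // e; rewrite leq_exp2r //; lia.
Qed.

Theorem theoremB (n : nat) (hn : (1 <= n)%N) :
  exists C : nat -> nat,
    is_disc_complexity (std_basis n) [:: (1 : int)] C /\
    asym_eq C (fun R => (R ^ (n - 1))%N).
Proof.
pose phi R := @radix_sum n R.+1.
have radix R : [/\ is_hom (phi R), discriminates_ball (std_basis n) R (phi R)
   & complexity_le (std_basis n) [:: 1] (phi R) (R.+1 ^ (n - 1))].
  split; [exact: radix_sum_is_hom | exact: radix_sum_discriminates |].
  exact: radix_sum_complexity.
have [C discC] : exists C, is_disc_complexity (std_basis n) [:: (1 : int)] C.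
  apply: disc_complexity_exists => R; exists (phi R), (R.+1 ^ (n - 1))%N.
  by have [? ? ?] := radix R.
exists C; split=> //; split.
- apply: asym_le_trans_pointwise (asym_le_expSn (n - 1)) => R.
  by have [_ Cmin] := discC R; have [? ? ?] := radix R; apply: Cmin.
- exists (2 * n)%N => -[|R] /=.
    apply: leq_trans (leq_addl _ _).
    by case: (n - 1)%N => [|e]; rewrite ?expn0 ?exp0n //; lia.
  have [[psi [hom [disc hc]]] _] := discC (2 * n * R.+1)%N.
  rewrite -mulnA mulnCA in disc.
  apply: leq_trans (leq_addr _ _).
  apply: leq_trans (complexity_lower_bound hom disc hc hn _) => //.
  by case: (n - 1)%N => // e; rewrite leq_exp2r //; lia.
Qed.
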